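(* Let $\Phi$ be any one of the three homomorphisms $\Psi,\Psi^+,\Psi^-:\mathsf{PGL}_2(\mathbb Z)\to\mathsf{PGL}_2(\mathbb C(q))$ defined by $\Phi(T)=\begin{bmatrix}q&1\\0&1\end{bmatrix}$ and $$\Psi(S)=\begin{bmatrix}0&-1\\ q&0\end{bmatrix},\ \Psi(V)=\begin{bmatrix}q&1-q\\ q-q^2&-q\end{bmatrix};\qquad \Psi^{\pm}(S)=\begin{bmatrix}1&q^{-1}\\ -q+\omega^{\pm1}&-1\end{bmatrix},\ \Psi^{\pm}(V)=\begin{bmatrix}1&\frac{1+q^{-1}}{q-\omega^{\pm1}}\\ 1-q&-1\end{bmatrix}.$$ Then there is no map $\psi:\mathsf P^1(\mathbb Z)\to\mathsf P^1(\mathbb C(q))$ satisfying $\psi(gx)=\Phi(g)\psi(x)$ for all $g\in\mathsf{PGL}_2(\mathbb Z)$ and $x\in\mathsf P^1(\mathbb Z)$. (Indeed $\psi(1)$ would have to be a fixed point of $\Phi(U)$, $U(x)=1/x$, and these fixed points involve $\sqrt{q^2-q+1}\notin\mathbb C(q)$.)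
   Context: $\omega=e^{2\pi i/6}$. An invertible matrix $\begin{bmatrix}a&b\\c&d\end{bmatrix}$ denotes the Möbius map $x\mapsto(ax+b)/(cx+d)$. In $\mathsf{PGL}_2(\mathbb Z)$: $T(x)=1+x$, $S(x)=-1/x$, $V(x)=-x$, which generate it; $\mathsf P^1(\mathbb Z)=\mathbb Q\cup\{\infty\}$ and $\mathsf P^1(\mathbb C(q))=\mathbb C(q)\cup\{\infty\}$ with Möbius actions. *)

(* C is modelled as R[i] = complex R for a real field R : realType
   (the genuine complex numbers arise for R = the reals); C(q) = {fraction {poly C}}. *)
From HB Require Import structures.
From mathcomp Require Import all_boot all_order all_algebra.
From mathcomp Require Import reals.
From mathcomp Require Export complex.
Set Implicit Arguments. Unset Strict Implicit. Unset Printing Implicit Defensive.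
Import Order.TTheory GRing.Theory Num.Theory.
Local Open Scope ring_scope.

(* P^1(K) = K ∪ {∞}, with None = ∞. *)
Definition P1 (K : Type) := option K.

Definition mob (K : fieldType) (A : 'M[K]_2) (x : P1 K) : P1 K :=
  let a := A 0 0 in let b := A 0 1 in let c := A 1 0 in let d := A 1 1 in
  match x with
  | Some y => if c * y + d != 0 then Some ((a * y + b) / (c * y + d)) else None
  | None => if c != 0 then Some (a / c) else None
  end.

Definition mx2 (K : pzRingType) (a b c d : K) : 'M[K]_2 :=
  \matrix_(i < 2, j < 2)
    (if i == 0 then (if j == 0 then a else b) else (if j == 0 then c else d)).

(* Elements of GL_2(Z); PGL_2(Z) = GL_2(Z)/{±I}. *)
Definition GL2Z (g : 'M[int]_2) : Prop := \det g = 1 \/ \det g = -1.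

(* Möbius action of an integer matrix on P^1(Z) = Q ∪ {∞}. *)
Definition mobZ (g : 'M[int]_2) (x : P1 rat) : P1 rat := mob (map_mx intr g) x.

Definition Tz : 'M[int]_2 := mx2 1 1 0 1.
Definition Sz : 'M[int]_2 := mx2 0 (-1) 1 0.
Definition Vz : 'M[int]_2 := mx2 (-1) 0 0 1.

(* Equality in PGL_2(K): proportional by a nonzero scalar. *)
Definition projeq (K : fieldType) (A B : 'M[K]_2) : Prop :=
  exists c : K, c != 0 /\ A = c *: B.

Section Cq.
Variable R : realType.
Local Open Scope complex_scope.
Definition CC := R[i].
Definition Cq := {fraction {poly CC}}.

(* omega = e^{2 pi i/6} = 1/2 + i sqrt(3)/2 *)
Definition omega : CC := (1 / 2) +i* (Num.sqrt 3 / 2).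

Definition qF : Cq := @FracField.tofrac _ ('X : {poly CC}).
Definition cst (c : CC) : Cq := @FracField.tofrac _ (c%:P).

Inductive which := Psi | PsiPlus | PsiMinus.

Definition om (w : which) : CC :=
  match w with PsiPlus => omega | _ => omega^-1 end.

Definition PhiT (w : which) : 'M[Cq]_2 := mx2 qF 1 0 1.
Definition PhiS (w : which) : 'M[Cq]_2 :=
  match w with
  | Psi => mx2 0 (-1) qF 0
  | _ => mx2 1 qF^-1 (- qF + cst (om w)) (-1)
  end.
Definition PhiV (w : which) : 'M[Cq]_2 :=
  match w with
  | Psi => mx2 qF (1 - qF) (qF - qF ^+ 2) (- qF)
  | _ => mx2 1 ((1 + qF^-1) / (qF - cst (om w))) (1 - qF) (-1)
  end.

(* Phi : GL_2(Z) -> GL_2(C(q)) inducing a homomorphism PGL_2(Z) -> PGL_2(C(q))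
   with the prescribed images of the generators T, S, V. *)
Definition is_Phi (w : which) (Phi : 'M[int]_2 -> 'M[Cq]_2) : Prop :=
  (forall g, GL2Z g -> \det (Phi g) != 0) /\
  (forall g h, GL2Z g -> GL2Z h -> projeq (Phi (g *m h)) (Phi g *m Phi h)) /\
  projeq (Phi (- 1%:M)) 1%:M /\
  projeq (Phi Tz) (PhiT w) /\
  projeq (Phi Sz) (PhiS w) /\
  projeq (Phi Vz) (PhiV w).
End Cq.

From HB Require Import structures.
From mathcomp Require Import all_boot all_order all_algebra.
From mathcomp Require Import reals complex ring.
Import Order.TTheory GRing.Theory Num.Theory.
Local Open Scope ring_scope.

(* U = V S acts on P^1(Z) by x |-> 1/x and fixes 1, so psi(1) would be a fixed
   point of Phi(V) Phi(S) in P^1(C(q)).  A Moebius map with lower-left entry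
   c != 0 has a fixed point only if its discriminant (d - a)^2 + 4 b c is a
   square; for Phi(U) it is a nonzero square times q^2 - q + 1, which is not a
   square in C(q) since its roots omega^{+-1} are simple. *)

Section Mx2.
Variable K : pzRingType.

Lemma mulmx2 (a b c d a' b' c' d' : K) :
  mx2 a b c d *m mx2 a' b' c' d' =
  mx2 (a * a' + b * c') (a * b' + b * d') (c * a' + d * c') (c * b' + d * d').
Proof.
apply/matrixP => i j; rewrite !mxE !big_ord_recr big_ord0 /= add0r !mxE.
by case: i => [[|[|?]] ?] //=; case: j => [[|[|?]] ?].
Qed.

Lemma map_mx2 (L : pzRingType) (f : K -> L) (a b c d : K) :
  map_mx f (mx2 a b c d) = mx2 (f a) (f b) (f c) (f d).
Proof.
apply/matrixP => i j; rewrite !mxE.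
by case: i => [[|[|?]] ?] //=; case: j => [[|[|?]] ?].
Qed.

End Mx2.

Lemma det_mx2 (K : comPzRingType) (a b c d : K) :
  \det (mx2 a b c d) = a * d - b * c.
Proof.
rewrite (expand_det_row _ 0) !big_ord_recr big_ord0 /= add0r /cofactor.
by rewrite !det_mx11 !mxE /= expr0 expr1 mul1r mulN1r mulrN.
Qed.

Section Moebius.
Context {K : fieldType}.
Implicit Types (A B : 'M[K]_2) (x : P1 K).

Lemma mob_scale (k : K) A x : k != 0 -> mob (k *: A) x = mob A x.
Proof.
move=> k0; case: x => [y|]; rewrite /mob /= !mxE -?mulrA -?mulrDr.
all: rewrite mulf_eq0 negb_or k0 /=; case: ifP => // den0.
all: by congr Some; field; rewrite k0 den0.
Qed.

Lemma mob_projeq {A B} : projeq A B -> mob A =1 mob B.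
Proof. by case=> k [k0 ->] x; apply: mob_scale. Qed.

Lemma projeq_mul {A A' B B'} :
  projeq A A' -> projeq B B' -> projeq (A *m B) (A' *m B').
Proof.
case=> k [k0 ->] [l [l0 ->]]; exists (k * l); rewrite mulf_neq0 //.
by rewrite -scalemxAl -scalemxAr scalerA.
Qed.

Lemma complete_square (c e b y : K) :
  c * y ^+ 2 + e * y - b = 0 -> (2 * c * y + e) ^+ 2 = e ^+ 2 + 4 * c * b.
Proof.
move=> root_y; apply/eqP; rewrite -subr_eq0.
have -> : (2 * c * y + e) ^+ 2 - (e ^+ 2 + 4 * c * b) =
  4 * c * (c * y ^+ 2 + e * y - b) by ring.
by rewrite root_y mulr0.
Qed.

(* The fixed points of x |-> (a x + b)/(c x + d), c != 0, are the roots of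
   c y^2 + (d - a) y - b. *)
Definition mob_disc A := (A 1 1 - A 0 0) ^+ 2 + 4 * A 1 0 * A 0 1.

Lemma mob_fixed_disc_sqr {A x} :
  A 1 0 != 0 -> mob A x = x -> exists z, z ^+ 2 = mob_disc A.
Proof.
rewrite /mob; case: x => [y|] c0; last by rewrite c0.
case: ifP => // den0 [fix_y]; exists (2 * A 1 0 * y + (A 1 1 - A 0 0)).
apply: complete_square.
have -> : A 0 1 = y * (A 1 0 * y + A 1 1) - A 0 0 * y.
  by rewrite -{1}fix_y divfK ?den0 //; ring.
ring.
Qed.

End Moebius.

Local Notation "x %:F" := (@FracField.tofrac _ x).

Lemma fraction_numden {R : idomainType} (x : {fraction R}) :
  exists2 nd : R * R, nd.2 != 0 & x = nd.1%:F / nd.2%:F.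
Proof.
elim/quotW: x => r; have r2 : r.2 != 0 := denom_ratioP r.
exists (r.1, r.2) => //=; apply: (@mulIf _ r.2%:F); first by rewrite tofrac_eq0.
rewrite divfK ?tofrac_eq0 //; unlock FracField.tofrac.
rewrite -[_ * _]FracField.pi_mul; apply/eqmodP.
rewrite /= FracField.equivfE !numden_Ratio ?oner_neq0 //.
all: by rewrite !mulr1 // mulrC.
Qed.

Section NonSquare.
Context {F : fieldType}.

(* [a] is a simple root of the right-hand side, so its multiplicity there is odd. *)
Lemma XsubC_mul_sqr_neq (a b : F) (n d : {poly F}) : a != b -> d != 0 ->
  n ^+ 2 != ('X - a%:P) * ('X - b%:P) * d ^+ 2.
Proof.
move=> ab d0; apply/eqP => sq.
have Xa0 : 'X - a%:P != 0 by rewrite polyXsubC_eq0.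
have Xb0 : 'X - b%:P != 0 by rewrite polyXsubC_eq0.
have n0 : n != 0.
  have rhs0 : ('X - a%:P) * ('X - b%:P) * d ^+ 2 != 0 by rewrite !mulf_neq0 ?expf_neq0.
  by apply: contraNneq rhs0 => n0; rewrite -sq n0 expr0n.
have := congr1 (mup a) sq; rewrite !expr2 !mupM ?mulf_neq0 //.
rewrite (@mupNroot _ a ('X - b%:P)) ?root_XsubC //.
have -> : mup a ('X - a%:P) = 1%N by have := @mup_XsubCX _ 1 a a; rewrite eqxx.
by move/(congr1 odd); rewrite /= !oddD !addbb.
Qed.

Lemma tofrac_XsubC_mul_not_sqr {a b : F} : a != b ->
  ~ exists z : {fraction {poly F}}, z ^+ 2 = (('X - a%:P) * ('X - b%:P))%:F.
Proof.
move=> ab [z sq]; have [[n d] /= d0 zE] := fraction_numden z.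
have /negP := XsubC_mul_sqr_neq a b n d ab d0; apply.
rewrite -tofrac_eq (tofracM (_ * _) (d ^+ 2)) -sq zE !tofracXn; apply/eqP.
by rewrite expr_div_n divfK // expf_neq0 ?tofrac_eq0.
Qed.

End NonSquare.

(* x^2 - x + 1 is the sixth cyclotomic polynomial. *)

Lemma sixth_root_neq0 {F : nzRingType} {a : F} : a ^+ 2 - a + 1 = 0 -> a != 0.
Proof.
by move=> ha; apply/eqP => a0; move: ha; rewrite a0 expr0n subr0 add0r => /eqP; rewrite oner_eq0.
Qed.

Lemma sixth_root_subr_neq0 {F : nzRingType} {a : F} : a ^+ 2 - a + 1 = 0 -> 1 - a != 0.
Proof.
move=> ha; rewrite subr_eq0; apply/eqP => a1; move: ha.
by rewrite -a1 expr1n subrr add0r => /eqP; rewrite oner_eq0.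
Qed.

Lemma sixth_root_inv {F : fieldType} {a : F} :
  a ^+ 2 - a + 1 = 0 -> a^-1 ^+ 2 - a^-1 + 1 = 0.
Proof.
move=> ha; have a0 := sixth_root_neq0 ha.
by rewrite -[RHS](mul0r (a ^+ 2)^-1) -ha; field.
Qed.

Lemma sixth_root_neq_subr {F : numFieldType} {a : F} : a ^+ 2 - a + 1 = 0 -> a != 1 - a.
Proof.
move=> ha; apply/eqP => e.
have : (a - (1 - a)) ^+ 2 = 4 * (a ^+ 2 - a + 1) - 3 by ring.
by rewrite -e subrr ha expr0n mulr0 sub0r => /eqP; rewrite eq_sym oppr_eq0 pnatr_eq0.
Qed.

Lemma XsubC_sixth_root_mul {F : comNzRingType} {a : F} : a ^+ 2 - a + 1 = 0 ->
  ('X - a%:P) * ('X - (1 - a)%:P) = 'X ^+ 2 - 'X + 1 :> {poly F}.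
Proof.
move=> ha; have a1a : a * (1 - a) = 1 by rewrite -[RHS]subr0 -ha; ring.
have -> : 1 = (a * (1 - a))%:P :> {poly F} by rewrite a1a polyC1.
rewrite polyCM polyCB polyC1; ring.
Qed.

Section DiscriminantOfU.
Context {F : fieldType}.

Lemma mob_disc_PsiU (q : F) :
  mob_disc (mx2 q (1 - q) (q - q ^+ 2) (- q) *m mx2 0 (-1) q 0) =
  (2 * q) ^+ 2 * (q ^+ 2 - q + 1).
Proof. by rewrite mulmx2 /mob_disc !mxE /=; ring. Qed.

Lemma mob_disc_PsiPMU (q W : F) : W ^+ 2 - W + 1 = 0 -> q != 0 -> q - W != 0 ->
  mob_disc (mx2 1 ((1 + q^-1) / (q - W)) (1 - q) (-1) *m mx2 1 q^-1 (- q + W) (-1)) =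
  (2 * W / (q * (q - W))) ^+ 2 * (q ^+ 2 - q + 1).
Proof.
move=> hW q0 qW; rewrite mulmx2 /mob_disc !mxE /=.
(* the two sides differ by a multiple of W^2 - W + 1 *)
rewrite -[LHS]addr0 -(mulr0 (4 * W / (q * (q - W) ^+ 2))) -hW.
by field; rewrite q0 qW.
Qed.

End DiscriminantOfU.

Section PhiU.
Variable R : realType.
Local Notation q := (qF R).

Lemma omega_root : omega R ^+ 2 - omega R + 1 = 0.
Proof.
rewrite /omega expr2; apply/eqP; rewrite eq_complex /=; apply/andP; split; apply/eqP.
  have -> : Num.sqrt 3 / 2 * (Num.sqrt 3 / 2) = Num.sqrt (3 : R) ^+ 2 / 4 by field.
  by rewrite sqr_sqrtr ?ler0n //; field.
by field.
Qed.

Lemma om_root w : om R w ^+ 2 - om R w + 1 = 0.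
Proof. by case: w; rewrite /= ?(sixth_root_inv omega_root) ?omega_root. Qed.

Lemma cst_eq0 (c : CC R) : (cst c == 0) = (c == 0).
Proof. by rewrite tofrac_eq0 polyC_eq0. Qed.

Lemma cst_root w : cst (om R w) ^+ 2 - cst (om R w) + 1 = 0.
Proof.
have := congr1 (@cst R) (om_root w).
by rewrite /cst !(rmorphD, rmorphN, rmorphXn, rmorph1, rmorph0).
Qed.

Lemma qF_neq0 : q != 0.
Proof. by rewrite tofrac_eq0 polyX_eq0. Qed.

Lemma qF_sub_cst_neq0 (c : CC R) : q - cst c != 0.
Proof. by rewrite -tofracB tofrac_eq0 polyXsubC_eq0. Qed.

Lemma two_neq0 : 2 != 0 :> Cq R.
Proof.
have -> : 2 = cst (2 : CC R) by rewrite /cst polyC_natr rmorph_nat.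
by rewrite cst_eq0 pnatr_eq0.
Qed.

Lemma cyclo6_qF_not_sqr : ~ exists z : Cq R, z ^+ 2 = q ^+ 2 - q + 1.
Proof.
have ho := omega_root; have := tofrac_XsubC_mul_not_sqr (sixth_root_neq_subr ho).
by rewrite XsubC_sixth_root_mul // !(rmorphD, rmorphN, rmorphXn, rmorph1).
Qed.

Lemma PhiU_10_neq0 w : (PhiV R w *m PhiS R w) 1 0 != 0.
Proof.
case: w; rewrite mulmx2 !mxE /=.
- by rewrite mulr0 add0r mulNr oppr_eq0 mulf_neq0 ?qF_neq0.
- by rewrite mulr1 mulN1r opprD opprK addrA subrK (sixth_root_subr_neq0 (cst_root PsiPlus)).
- by rewrite mulr1 mulN1r opprD opprK addrA subrK (sixth_root_subr_neq0 (cst_root PsiMinus)).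
Qed.

Lemma PhiU_disc w : exists2 k : Cq R, k != 0 &
  mob_disc (PhiV R w *m PhiS R w) = k ^+ 2 * (q ^+ 2 - q + 1).
Proof.
case: w; [|set w := PsiPlus | set w := PsiMinus].
  by exists (2 * q); [exact: mulf_neq0 two_neq0 qF_neq0 | exact: mob_disc_PsiU].
all: have hW := cst_root w; have qW := qF_sub_cst_neq0 (om R w).
all: exists (2 * cst (om R w) / (q * (q - cst (om R w)))).
all: try exact: mob_disc_PsiPMU hW qF_neq0 qW.
all: apply: mulf_neq0; first exact: mulf_neq0 two_neq0 (sixth_root_neq0 hW).
all: by rewrite invr_eq0; apply: mulf_neq0 qF_neq0 qW.
Qed.

End PhiU.

Lemma GL2Z_Vz : GL2Z Vz.
Proof. by right; rewrite det_mx2. Qed.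

Lemma GL2Z_Sz : GL2Z Sz.
Proof. by left; rewrite det_mx2. Qed.

Lemma mulVSz : Vz *m Sz = mx2 0 1 1 0.
Proof. by rewrite mulmx2; congr mx2. Qed.

Lemma mobZ_VSz_1 : mobZ (Vz *m Sz) (Some 1) = Some 1.
Proof.
by rewrite mulVSz /mobZ map_mx2 /mob !mxE /= !rmorph0 !rmorph1 mul0r add0r mulr1.
Qed.

Theorem mainTheorem6 (R : realType) (w : which) (Phi : 'M[int]_2 -> 'M[Cq R]_2) :
  is_Phi w Phi ->
  ~ exists psi : P1 rat -> P1 (Cq R),
      forall (g : 'M[int]_2) (x : P1 rat), GL2Z g ->
        psi (mobZ g x) = mob (Phi g) (psi x).
Proof.
move=> [_ [Phi_mul [_ [_ [PhiSz PhiVz]]]]] [psi psi_equiv].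
have GL2Z_VSz : GL2Z (Vz *m Sz) by right; rewrite mulVSz det_mx2.
have fix_psi1 : mob (PhiV R w *m PhiS R w) (psi (Some 1)) = psi (Some 1).
  rewrite -(mob_projeq (projeq_mul PhiVz PhiSz)).
  rewrite -(mob_projeq (Phi_mul _ _ GL2Z_Vz GL2Z_Sz)).
  by rewrite -psi_equiv // mobZ_VSz_1.
have [z z_sqr] := mob_fixed_disc_sqr (PhiU_10_neq0 R w) fix_psi1.
have [k k0 disc_k] := PhiU_disc R w.
apply: cyclo6_qF_not_sqr; exists (z / k).
by rewrite expr_div_n z_sqr disc_k mulrAC (divff (expf_neq0 2 k0)) mul1r.
Qed.
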